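(* Let $G$ be an innately transitive permutation group on a finite set $\Omega$ and let $M$ be a plinth of $G$. If $\{\Gamma_1,\ldots,\Gamma_\ell\}$ is a $G$-invariant Cartesian decomposition of $\Omega$, then each $\Gamma_i$ ($1\le i\le \ell$) is an $M$-invariant partition of $\Omega$, that is, every element of $M$ maps each part of $\Gamma_i$ onto a part of $\Gamma_i$.
   Context: A Cartesian decomposition of a finite set $\Omega$ is a set $\mathcal E=\{\Gamma_1,\ldots,\Gamma_\ell\}$ of partitions of $\Omega$ such that $|\gamma_1\cap\cdots\cap\gamma_\ell|=1$ for all $\gamma_1\in\Gamma_1,\ldots,\gamma_\ell\in\Gamma_\ell$. For $g\in\mathrm{Sym}(\Omega)$, $\mathcal E$ is $g$-invariant if $g$ permutes the partitions in $\mathcal E$ (i.e. for each $i$ the image of $\Gamma_i$ under $g$ is some $\Gamma_j$); $\mathcal E$ is $G$-invariant if it is $g$-invariant for all $g\in G$. A finite permutation group is innately transitive if it has at least one transitive minimal normal subgroup; such a transitive minimal normal subgroup is called a plinth. *)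

From mathcomp Require Import all_boot all_order all_fingroup all_solvable.
Set Implicit Arguments. Unset Strict Implicit. Unset Printing Implicit Defensive.
Local Open Scope group_scope.

Section Defs.
Variable T : finType.

Definition is_partition (P : {set {set T}}) : Prop := partition P [set: T].

Definition cartesian_decomposition (E : {set {set {set T}}}) : Prop :=
  (forall P, P \in E -> is_partition P) /\
  (forall f : {set {set T}} -> {set T},
      (forall P, P \in E -> f P \in P) ->
      #|\bigcap_(P in E) f P| = 1%N).

Definition part_image (g : {perm T}) (P : {set {set T}}) : {set {set T}} :=
  (fun B : {set T} => g @: B) @: P.

Definition g_invariant_cd (g : {perm T}) (E : {set {set {set T}}}) : Prop :=
  forall P, P \in E -> part_image g P \in E.

Definition G_invariant_cd (G : {set {perm T}}) (E : {set {set {set T}}}) : Prop :=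
  forall g, g \in G -> g_invariant_cd g E.

Definition M_invariant_partition (M : {set {perm T}}) (P : {set {set T}}) : Prop :=
  forall m, m \in M -> forall B, B \in P -> m @: B \in P.

Definition minimal_normal (M G : {group {perm T}}) : Prop :=
  M <| G /\ minnormal M G.

Definition plinth (M G : {group {perm T}}) : Prop :=
  minimal_normal M G /\ [transitive M, on [set: T] | 'P].

Definition innately_transitive (G : {group {perm T}}) : Prop :=
  exists M : {group {perm T}}, plinth M G.
End Defs.

(** If a plinth [M] moved one partition [P] of the decomposition, the kernel
    of [M] on the [G]-orbit [U] of [P] in [E] would be a proper [G]-normal
    subgroup of [M], hence trivial; so [M] embeds in [Sym U] and [#|M|]
    divides [#|U|`!].  On the other hand the Cartesian property makes the
    points of [Omega] with prescribed blocks in every partition of [U] into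
    [#|P| ^ #|U|] nonempty classes, which the transitive group [M] permutes
    transitively, so [#|P| ^ #|U|] divides [#|M|].  For a prime [p] dividing
    [#|P| > 1] this gives [p ^ #|U| %| #|U|`!], against Legendre's formula. *)
From mathcomp Require Import all_boot all_order all_fingroup all_solvable.
From mathcomp Require Import zify.

Set Implicit Arguments.
Unset Strict Implicit.
Unset Printing Implicit Defensive.

(* The [maxn _ 1] term is what makes the bound of [logn_fact_lt] strict. *)
Lemma sum_divn_exp2_le u n :
  0 < u -> \sum_(1 <= k < n.+1) u %/ 2 ^ k + maxn (u %/ 2 ^ n) 1 <= u.
Proof.
move=> u_gt0; elim: n => [|n IHn]; first by rewrite big_geq // expn0 divn1; lia.
rewrite big_nat_recr //= expnSr divnMA.
by move: IHn; set a := u %/ 2 ^ n; set s := \sum_(_ <= _ < _) _; lia.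
Qed.

Lemma logn_fact_lt p n : prime p -> 0 < n -> logn p n`! < n.
Proof.
move=> p_pr n_gt0; rewrite logn_fact //.
apply: leq_trans (sum_divn_exp2_le n n_gt0).
rewrite -addn1 leq_add ?leq_maxr //.
apply: leq_sum => -[|k] _ //; apply: leq_div2l; first by rewrite expn_gt0.
by rewrite leq_exp2r // prime_gt1.
Qed.

Lemma expn_ndvdn_fact p n : prime p -> 0 < n -> ~~ (p ^ n %| n`!).
Proof.
move=> p_pr n_gt0.
by rewrite pfactor_dvdn ?fact_gt0 // -ltnNge logn_fact_lt.
Qed.

Local Open Scope group_scope.

Section FaithfulAction.

Variables (aT : finGroupType) (rT : finType) (to : {action aT &-> rT}).

Lemma minnormal_faithful (G M : {group aT}) (U : {set rT}) :
    minnormal M G -> [acts G, on U | to] -> ~~ (M \subset 'C(U | to)) ->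
  [faithful M, on U | to].
Proof.
move=> /mingroupP[/andP[_ nMG] minM] actsGU; apply: contraR => ntK.
have nKG : G \subset 'N('C_M(U | to)).
  by rewrite normsI // (subset_trans actsGU) ?astab_norm.
have defK : 'C_M(U | to) = M :> {set aT}.
  by apply: minM; rewrite ?subsetIl // nKG andbT -subG1.
by rewrite -defK subsetIr.
Qed.

Lemma faithful_card_dvdn_fact (M : {group aT}) (U : {set rT}) :
    [acts M, on U | to] -> [faithful M, on U | to] -> #|M| %| #|U|`!.
Proof.
move=> actsMU ffulMU.
rewrite (isom_card (faithful_isom actsMU ffulMU)) -(perm.card_Sym U).
apply: cardSg; apply/subsetP => s /morphimP[a _ Ma ->].
rewrite inE; apply/subsetP => x; rewrite inE actpermE /= /actby.
by apply: contraR => /negPf ->.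
Qed.

End FaithfulAction.

(* The fibres of [f] are blocks of [M], forming one orbit of [M] on sets;
   [x0] excludes the empty [T], where the left side is [0]. *)
Lemma card_imset_dvdn_transitive (T R : finType) (M : {group {perm T}})
    (f : T -> R) (x0 : T) :
    [transitive M, on [set: T] | 'P] ->
    {in M, forall (g : {perm T}) x y, f x = f y -> f (g x) = f (g y)} ->
  #|f @: [set: T]| %| #|M|.
Proof.
move=> trM fM.
pose fibre x := [set y | f y == f x].
have fibreM g x : g \in M -> g @: fibre x = fibre (g x).
  move=> Mg; apply/setP => z; rewrite inE; apply/imsetP/eqP => [[y]|fz].
    by rewrite inE => /eqP fy ->; apply: fM.
  exists (g^-1 z); last by rewrite permKV.
  by rewrite inE (fM _ (groupVr Mg) _ _ fz) permK.
have -> : #|f @: [set: T]| = #|fibre @: [set: T]|.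
  have injF : {in f @: [set: T] &, injective (fun r => [set y | f y == r])}.
    move=> _ _ /imsetP[x _ ->] /imsetP[y _ ->] /setP/(_ y).
    by rewrite !inE eqxx => /eqP.
  by rewrite -(card_in_imset injF) -imset_comp.
have -> : fibre @: [set: T] = orbit 'P^* M (fibre x0).
  apply/setP => Z; apply/imsetP/imsetP => [[x _ ->]|[g Mg ->]].
    have /imsetP[g Mg ->] : x \in orbit 'P M x0 by rewrite (atransP trM) ?inE.
    by exists g; rewrite //= -fibreM.
  by exists (g x0); rewrite //= -fibreM.
exact: dvdn_orbit.
Qed.

Section CartesianDecomposition.

Variable T : finType.
Implicit Types (P Q : {set {set T}}) (E U : {set {set {set T}}}).

Lemma part_image_card_le1 (g : {perm T}) P :
  is_partition P -> #|P| <= 1 -> part_image g P = P.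
Proof.
move=> partP; rewrite leq_eqVlt ltnS leqn0 cards_eq0.
case/orP => [/cards1P[B defP] | /eqP ->]; last by rewrite /part_image imset0.
have defB : B = [set: T] by rewrite -(cover_partition partP) defP cover1.
have gT : g @: [set: T] = [set: T].
  by apply/setP => x; rewrite inE -[x](permKV g) imset_f ?inE.
by rewrite /part_image defP imset_set1 defB gT.
Qed.

Lemma pblock_part_image (g : {perm T}) P y :
  is_partition P -> pblock (part_image g P) (g y) = g @: pblock P y.
Proof.
move=> partP; have coverP := cover_partition partP.
apply: def_pblock; last by rewrite imset_f // mem_pblock coverP.
  by rewrite imset_trivIset ?(partition_trivIset partP) //; apply: perm_inj.
by rewrite imset_f // pblock_mem // coverP.
Qed.

Lemma part_imageKV (g : {perm T}) : cancel (part_image g^-1) (part_image g).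
Proof. exact: (actKV (('P^*)^*)%act g). Qed.

Definition profile U (x : T) : {ffun {set {set T}} -> {set T}} :=
  [ffun Q => if Q \in U then pblock Q x else set0].

Lemma profile_perm U (g : {perm T}) x y :
    {in U, forall Q, is_partition Q} ->
    {in U, forall Q, part_image g^-1 Q \in U} ->
  profile U x = profile U y -> profile U (g x) = profile U (g y).
Proof.
move=> partU nUg /ffunP eqxy; apply/ffunP => Q; rewrite !ffunE.
case: ifP => // QU; have Q'U := nUg Q QU; have partQ' := partU _ Q'U.
rewrite -[Q in pblock Q](part_imageKV g) !pblock_part_image //.
by move: (eqxy (part_image g^-1 Q)); rewrite !ffunE Q'U => ->.
Qed.

(* [x0] excludes the empty [Omega], for which [E = [set set0]] is a Cartesian
   decomposition and the count fails for [U = set0]. *)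
Lemma card_profiles (x0 : T) E U :
    cartesian_decomposition E -> U \subset E ->
  #|profile U @: [set: T]| = (\prod_(Q in U) #|Q|)%N.
Proof.
move=> [partE cartE] sUE.
have pblockE Q x : Q \in E -> pblock Q x \in Q.
  by move=> QE; rewrite pblock_mem // (cover_partition (partE Q QE)).
transitivity #|pfamily set0 U (fun Q => Q)|.
  2: by rewrite card_pfamily foldrE big_map big_enum.
apply: eq_card => f; apply/imsetP/pfamilyP => [[x _ ->]|[suppf famf]].
  split; last by move=> Q QU; rewrite ffunE QU pblockE ?(subsetP sUE).
  by apply/subsetP => Q; rewrite !inE ffunE; case: ifP; rewrite ?eqxx.
pose c Q := if Q \in U then f Q else pblock Q x0.
have cE Q : Q \in E -> c Q \in Q by rewrite /c; case: ifP => [/famf|_ /pblockE].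
have /card_gt0P[x /bigcapP xc] : 0 < #|\bigcap_(Q in E) c Q| by rewrite cartE.
exists x => //; apply/ffunP => Q; rewrite ffunE.
case: ifP => [QU | /negbT QU].
  have QE := subsetP sUE Q QU; have := xc Q QE; rewrite /c QU => xf.
  by rewrite (def_pblock (partition_trivIset (partE Q QE)) (famf Q QU) xf).
by apply/eqP; apply: contraR QU => nzf; apply: (subsetP suppf); rewrite inE.
Qed.

End CartesianDecomposition.

Theorem proposition3p1 (T : finType) (G M : {group {perm T}})
  (E : {set {set {set T}}}) :
  innately_transitive G -> plinth M G ->
  cartesian_decomposition E -> G_invariant_cd G E ->
  forall P, P \in E -> M_invariant_partition M P.
Proof.
move=> _ [[nMG minM] trM] cdE nEG P PE m Mm B BP.
have [fixP | movP] := eqVneq (part_image m P) P; first by rewrite -fixP imset_f.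
have [partE _] := cdE; have sMG := normal_sub nMG.
pose U := orbit (('P^*)^*)%act G P.
have sUE : U \subset E by apply/subsetP => _ /imsetP[g Gg ->]; apply: nEG.
have actsGU : [acts G, on U | ('P^*)^*] by apply: acts_orbit; apply: subsetT.
have actsMU := subset_trans sMG actsGU.
have dvdMU : #|M| %| #|U|`!.
  apply: (faithful_card_dvdn_fact actsMU); apply: minnormal_faithful minM actsGU _.
  by apply: contra movP => /subsetP/(_ m Mm)/astabP/(_ P (orbit_refl _ _ _))/eqP.
have cardU Q : Q \in U -> #|Q| = #|P| by case/imsetP => g _ ->; apply: card_setact.
have P_gt1 : 1 < #|P|.
  by rewrite ltnNge; apply: contra movP => /part_image_card_le1 -> //; apply: partE.
have dvdPU : (#|P| ^ #|U|)%N %| #|M|.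
  have /set0Pn[x0 _] := partition_neq0 (partE P PE) BP.
  rewrite -prod_nat_const -(eq_bigr _ cardU) -(card_profiles x0 cdE sUE).
  apply: card_imset_dvdn_transitive x0 trM _ => g Mg x y; apply: profile_perm.
    by move=> Q /(subsetP sUE)/partE.
  by move=> Q QU; rewrite (acts_act actsMU) ?groupV.
have U_gt0 : 0 < #|U| by apply/card_gt0P; exists P; apply: orbit_refl.
case/negP: (expn_ndvdn_fact (pdiv_prime P_gt1) U_gt0).
exact: dvdn_trans (dvdn_exp2r _ (pdiv_dvd _)) (dvdn_trans dvdPU dvdMU).
Qed.
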